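(* Let $G$ be a finite group, let $\pi$ be a set of primes, let $q\in\pi$ and let $Q$ be a Sylow $q$-subgroup of $G$. Let $\mathcal{S}_{q'}(G_\pi)$ denote the union of all conjugacy classes $g^G$ with $g$ a $\pi$-element of $G$ such that $|g^G|$ is not divisible by $q$. If $\mathbf{Z}(Q)\le\mathbf{Z}(G)$ and $C_G(Q)$ has a normal Hall $\pi$-subgroup, then $|\mathbf{Z}(G)|_q=|\mathcal{S}_{q'}(G_\pi)|_q$.
   Context: A $\pi$-element is an element whose order is divisible only by primes in $\pi$. For a positive integer $n$ and prime $q$, $n_q$ denotes the largest power of $q$ dividing $n$. $|g^G|=|G:C_G(g)|$ is the size of the conjugacy class of $g$. *)

From mathcomp Require Import all_boot all_fingroup all_solvable.
Set Implicit Arguments. Unset Strict Implicit. Unset Printing Implicit Defensive.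
Local Open Scope group_scope.

Definition Sqp (gT : finGroupType) (G : {set gT}) (pi : nat_pred) (q : nat)
  : {set gT} :=
  \bigcup_(g in G | pi.-elt g && ~~ (q %| #|g ^: G|)%N) (g ^: G).

(* Let Z := 'Z(Q), a q-group that is central in G. A q-element whose class
   has q'-size is central in a Sylow q-subgroup of its centraliser, hence of G,
   and all Sylow q-subgroups of G have centre Z; so every g in S := S_{q'}(G_pi)
   has its q-part in Z. As S is also stable under q'-parts and under
   multiplication by Z, g |-> (g_q, g_q') identifies S with Z x X, where X is
   the set of q'-elements of S; likewise |Z(G)|_q = |Z|. Conjugation by Q makes
   |X| congruent mod q to the number of q'-elements of S /\ C(Q), and
   S /\ C(Q) is the normal Hall pi-subgroup H of C_G(Q). Since
   |H|_q = |C_G(Q)|_q = |Z|, the same decomposition of H shows that q does not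
   divide that number, hence not |X|, and |S|_q = |Z|. *)

From mathcomp Require Import all_boot all_fingroup all_solvable.
Set Implicit Arguments. Unset Strict Implicit. Unset Printing Implicit Defensive.
Local Open Scope group_scope.

Section ClassesAndSylow.

Variable gT : finGroupType.
Implicit Types (G Q R Z : {group gT}) (x y z h : gT).

Lemma card_class_cycle_dvd G x y : y \in <[x]> -> (#|y ^: G| %| #|x ^: G|)%N.
Proof.
move=> xy; rewrite -!index_cent1 indexgS // setIS // sub_cent1.
by apply: subsetP xy; rewrite cycle_subG -sub_cent1.
Qed.

Lemma card_class_mul_center G z x : z \in 'Z(G) -> #|(z * x) ^: G| = #|x ^: G|.
Proof.
case/centerP=> _ cGz; rewrite -!index_cent1; congr #|_ : _|.
apply/setP=> y; rewrite !in_setI !cent1E; case Gy: (y \in G) => //=.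
by rewrite !mulgA (commute_sym (cGz y Gy)) -!mulgA (inj_eq (mulgI z)).
Qed.

Lemma p_elt_center_Sylow (p : nat) G h :
  h \in G -> p.-elt h -> p^'.-nat #|h ^: G| ->
  exists2 R : {group gT}, p.-Sylow(G) R & h \in 'Z(R).
Proof.
move=> Gh ph p'hG; set C := 'C_G[h].
have [R sylR] := Sylow_exists p C; have [sRC pR p'iCR] := and3P sylR.
have sCG : C \subset G := subsetIl _ _.
exists R.
  rewrite /pHall (subset_trans sRC sCG) pR -(Lagrange_index sCG sRC) pnatM.
  by rewrite index_cent1 p'hG p'iCR.
have hR : h \in R.
  have hZC : <[h]> \subset 'Z(C).
    rewrite cycle_subG; apply/centerP; split; first exact/subcent1P.
    by move=> y /subcent1P[].
  rewrite -cycle_subG; apply: subset_trans (pcore_sub_Hall sylR).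
  exact: pcore_max ph (sub_center_normal hZC).
by apply/centerP; split=> // y /(subsetP sRC)/subcent1P[].
Qed.

Lemma center_Sylow_eq (p : nat) G Q R :
  p.-Sylow(G) Q -> p.-Sylow(G) R -> 'Z(Q) \subset 'Z(G) -> 'Z(R) = 'Z(Q).
Proof.
move=> sylQ sylR sZQ; have [y Gy ->] := Sylow_trans sylQ sylR.
rewrite /center centJ -conjIg; apply/normP.
apply: subsetP y Gy; apply: subset_trans (cent_sub _).
by rewrite centsC (subset_trans sZQ) ?subsetIr.
Qed.

Lemma part_card_center_Sylow (p : nat) G Q :
  p.-Sylow(G) Q -> 'Z(Q) \subset 'Z(G) -> (#|'Z(G)|`_p = #|'Z(Q)|)%N.
Proof.
move=> sylQ sZQ; have sQG := pHall_sub sylQ.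
have -> : 'Z(Q) = Q :&: 'Z(G) :> {set gT}.
  apply/eqP; rewrite eqEsubset subsetI center_sub sZQ andbT.
  apply/subsetP=> x /setIP[Qx /centerP[_ cGx]]; apply/centerP; split=> // y Qy.
  exact/cGx/(subsetP sQG).
by rewrite (card_Hall (Hall_setI_normal (center_normal G) sylQ)).
Qed.

Lemma part_card_subcent_Sylow (p : nat) G Q :
  p.-Sylow(G) Q -> (#|'C_G(Q)|`_p = #|'Z(Q)|)%N.
Proof.
move=> sylQ; have sQG := pHall_sub sylQ.
have sylQN : p.-Sylow('N_G(Q)) Q.
  by apply: pHall_subl sylQ; rewrite ?subsetIl // subsetI sQG normG.
have -> : 'Z(Q) = Q :&: 'C_G(Q) :> {set gT} by rewrite setIA (setIidPl sQG).
by rewrite (card_Hall (Hall_setI_normal (subcent_normal G Q) sylQN)).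
Qed.

Lemma card_p_central_decomp (pi : nat_pred) Z (Y : {set gT}) :
  pi.-group Z -> Z \subset 'C(Y) ->
  {in Y, forall g, g.`_pi \in Z} -> {in Y, forall g, g.`_pi^' \in Y} ->
  {in Z & Y, forall z x, z * x \in Y} ->
  #|Y| = (#|Z| * #|[set x in Y | pi^'.-elt x]|)%N.
Proof.
move=> piZ cZY Ypi Ypi' ZY_Y; set X := [set x in Y | pi^'.-elt x].
have mulK z x : z \in Z -> x \in X -> (z * x).`_pi = z.
  move=> Zz /setIdP[Yx pi'x]; have /centP czx := subsetP cZY z Zz.
  rewrite consttM; last exact: czx.
  by rewrite constt_p_elt ?(mem_p_elt piZ) // (constt1P pi'x) mulg1.
rewrite -cardsX -(card_in_imset (f := fun u => u.1 * u.2)).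
  apply: eq_card => g; apply/idP/imsetP=> [Yg | [[z x] /setXP[Zz /setIdP[Yx _]] ->]].
    exists (g.`_pi, g.`_pi^'); last by rewrite /= consttC.
    by rewrite inE /= Ypi // inE Ypi' // p_elt_constt.
  exact: ZY_Y.
move=> [z x] [z' x'] /setXP[Zz Xx] /setXP[Zz' Xx'] /= eq_zx.
have ez : z = z' by rewrite -(mulK z x) // eq_zx mulK.
by move: eq_zx; rewrite ez => /mulgI ->.
Qed.

End ClassesAndSylow.

Section Sqp.

Variables (gT : finGroupType) (G : {group gT}) (pi : nat_pred) (q : nat).
Local Notation S := (Sqp G pi q).

Lemma in_Sqp g : (g \in S) = [&& g \in G, pi.-elt g & ~~ (q %| #|g ^: G|)%N].
Proof.
apply/bigcupP/and3P => [[x /andP[Gx /andP[pi_x q'x]] gx] | [Gg pi_g q'g]].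
  have /class_eqP -> := gx; case/imsetP: gx => y Gy ->.
  by rewrite groupJ // p_eltJ pi_x q'x.
by exists g; rewrite ?Gg ?pi_g ?q'g ?class_refl.
Qed.

Lemma Sqp_sub : S \subset G.
Proof. by apply/subsetP=> g; rewrite in_Sqp => /andP[]. Qed.

Lemma SqpJ g y : y \in G -> (g ^ y \in S) = (g \in S).
Proof. by move=> Gy; rewrite !in_Sqp groupJr // p_eltJ classGidl. Qed.

Lemma cycle_sub_Sqp g : g \in S -> <[g]> \subset S.
Proof.
rewrite in_Sqp => /and3P[Gg pi_g q'g]; apply/subsetP=> y gy.
have sgG : <[g]> \subset G by rewrite cycle_subG.
rewrite in_Sqp (subsetP sgG) // (mem_p_elt pi_g) //=.
by apply: contra q'g => /dvdn_trans; apply; apply: card_class_cycle_dvd.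
Qed.

Lemma Sqp_mul_center z x : z \in 'Z(G) -> pi.-elt z -> x \in S -> z * x \in S.
Proof.
move=> ZGz pi_z; rewrite !in_Sqp card_class_mul_center // => /and3P[Gx pi_x ->].
case/centerP: ZGz => Gz cGz.
by rewrite groupM // p_eltM //; apply: cGz.
Qed.

Variable Q : {group gT}.
Hypotheses (q_pr : prime q) (sylQ : q.-Sylow(G) Q) (sZQ : 'Z(Q) \subset 'Z(G)).

Let qZ : q.-group 'Z(Q) := pgroupS (center_sub Q) (pHall_pgroup sylQ).

Lemma Sqp_constt_center g : g \in S -> g.`_q \in 'Z(Q).
Proof.
move=> Sg; have := subsetP (cycle_sub_Sqp Sg) _ (cycle_constt q g).
rewrite in_Sqp -p'natE // => /and3P[Gh _ q'hG].
have [R sylR ZRh] := p_elt_center_Sylow Gh (p_elt_constt q g) q'hG.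
by rewrite -(center_Sylow_eq sylQ sylR sZQ).
Qed.

Lemma card_SqpI (A : {group gT}) : q \in pi -> 'Z(Q) \subset A ->
  #|S :&: A| = (#|'Z(Q)| * #|[set x in S :&: A | q^'.-elt x]|)%N.
Proof.
move=> pi_q sZA; apply: (card_p_central_decomp qZ).
- apply: subset_trans sZQ _; rewrite centsC.
  apply: subset_trans (subsetIl _ _) (subset_trans Sqp_sub _).
  by rewrite centsC subsetIr.
- by move=> g /setIP[/Sqp_constt_center].
- move=> g /setIP[Sg Ag]; rewrite inE (subsetP (cycle_sub_Sqp Sg)) ?cycle_constt //=.
  by apply: subsetP (cycle_constt _ g); rewrite cycle_subG.
- move=> z x Zz /setIP[Sx Ax]; rewrite inE groupM ?(subsetP sZA z Zz) // andbT.
  apply: Sqp_mul_center (subsetP sZQ z Zz) _ Sx.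
  by apply: sub_p_elt (mem_p_elt qZ Zz) => p /eqnP->.
Qed.

Lemma card_Sqp_p'elt_mod :
  #|[set x in S | q^'.-elt x]| = #|[set x in S :&: 'C(Q) | q^'.-elt x]| %[mod q].
Proof.
have -> : [set x in S :&: 'C(Q) | q^'.-elt x] = 'Fix_([set x in S | q^'.-elt x] | 'J)(Q).
  by apply/setP=> x; rewrite afixJ !inE andbAC.
apply: pgroup_fix_mod (pHall_pgroup sylQ) _.
apply/actsP=> y Qy x; rewrite !inE /= SqpJ ?p_eltJ //.
exact: subsetP (pHall_sub sylQ) y Qy.
Qed.

Lemma Sqp_cent_Hall (H : {group gT}) :
  pi.-Hall('C_G(Q)) H -> H <| 'C_G(Q) -> S :&: 'C(Q) = H.
Proof.
move=> hallH nsHC; apply/setP=> g; rewrite inE in_Sqp.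
apply/idP/idP=> [/andP[/and3P[Gg pi_g _] Cg] | Hg].
  by rewrite (mem_normal_Hall hallH nsHC) // inE Gg.
have /setIP[Gg Cg] := subsetP (pHall_sub hallH) g Hg.
rewrite Gg Cg (mem_p_elt (pHall_pgroup hallH) Hg) /= andbT -p'natE // -index_cent1.
have [_ _ q'iGQ] := and3P sylQ; apply: pnat_dvd q'iGQ.
by rewrite indexgS // subsetI (pHall_sub sylQ) sub_cent1.
Qed.

Lemma p'nat_card_Sqp_cent_p'elt (H : {group gT}) :
  q \in pi -> pi.-Hall('C_G(Q)) H -> H <| 'C_G(Q) ->
  q^'.-nat #|[set x in S :&: 'C(Q) | q^'.-elt x]|.
Proof.
move=> pi_q hallH nsHC; set X := [set x in _ | _].
have cardH : #|H| = (#|'Z(Q)| * #|X|)%N.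
  by rewrite -(Sqp_cent_Hall hallH nsHC) (card_SqpI (A := 'C(Q)%G)) ?subsetIr.
have X_gt0 : 0 < #|X| by move: (cardG_gt0 H); rewrite cardH muln_gt0 => /andP[].
have := part_card_subcent_Sylow sylQ.
rewrite -(partn_part _ (pi := q) (rho := pi)) => [|p /eqnP-> //].
rewrite -(card_Hall hallH) cardH partnM // (part_pnat_id qZ) -partn_eq1 //.
by rewrite -{2}[#|'Z(Q)|]muln1 => /eqP; rewrite eqn_pmul2l.
Qed.

Lemma part_card_Sqp (H : {group gT}) :
  q \in pi -> pi.-Hall('C_G(Q)) H -> H <| 'C_G(Q) -> (#|S|`_q = #|'Z(Q)|)%N.
Proof.
move=> pi_q hallH nsHC; set X := [set x in S | q^'.-elt x].
have q'X : q^'.-nat #|X|.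
  rewrite p'natE // /dvdn card_Sqp_p'elt_mod -/(dvdn _ _) -p'natE //.
  exact: p'nat_card_Sqp_cent_p'elt hallH nsHC.
have X_gt0 : 0 < #|X| by case/andP: q'X.
have sZG : 'Z(Q) \subset G := subset_trans (center_sub Q) (pHall_sub sylQ).
rewrite -(setIidPl Sqp_sub) (card_SqpI pi_q sZG) (setIidPl Sqp_sub) -/X.
by rewrite partnM // (part_pnat_id qZ) (part_p'nat q'X) muln1.
Qed.

End Sqp.

Theorem proposition3p7 (gT : finGroupType) (G Q : {group gT})
  (pi : nat_pred) (q : nat) :
  prime q -> q \in pi -> Q \in 'Syl_q(G) ->
  'Z(Q) \subset 'Z(G) ->
  (exists H : {group gT}, pi.-Hall('C_G(Q)) H /\ H <| 'C_G(Q)) ->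
  (#|'Z(G)|`_q = #|Sqp G pi q|`_q)%N.
Proof.
move=> q_pr pi_q; rewrite inE => sylQ sZQ [H [hallH nsHC]].
by rewrite (part_card_center_Sylow sylQ sZQ) (part_card_Sqp q_pr sylQ sZQ pi_q hallH nsHC).
Qed.
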